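(* Let $A$ (in $\mathcal H$) and $B$ (in $\mathcal K$) be closed densely defined operators with $A\dashv B$ via a bounded intertwining operator $T$. Assume that $T^{-1}$ is everywhere defined and bounded and that $TD(A)$ is a core for $B$. Then $\sigma_p(A)\subseteq\sigma_p(B)\subseteq\sigma(B)\subseteq\sigma(A)$.
   Context: A bounded operator $T:\mathcal H\to\mathcal K$ is a bounded intertwining operator for $A$ and $B$ if $T D(A)\subseteq D(B)$ and $BT\xi=TA\xi$ for all $\xi\in D(A)$. $A\dashv B$ (quasi-similarity) means there is a bounded intertwining operator $T$ for $A$ and $B$ that is injective with densely defined inverse $T^{-1}$. $\sigma(A)$ is the spectrum (complement of the set of $\lambda$ for which $(A-\lambda I)^{-1}$ exists as a bounded everywhere defined operator) and $\sigma_p(A)$ the set of eigenvalues. *)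

From Stdlib Require Import Reals.
Open Scope R_scope.

Record C := mkC { Re : R; Im : R }.
Definition C0 : C := mkC 0 0.
Definition C1 : C := mkC 1 0.
Definition Cadd (a b : C) : C := mkC (Re a + Re b) (Im a + Im b).
Definition Copp (a : C) : C := mkC (- Re a) (- Im a).
Definition Cmul (a b : C) : C :=
  mkC (Re a * Re b - Im a * Im b) (Re a * Im b + Im a * Re b).
Definition Cconj (a : C) : C := mkC (Re a) (- Im a).

Record Hilbert := {
  carrier :> Type;
  hzero : carrier;
  hadd : carrier -> carrier -> carrier;
  hopp : carrier -> carrier;
  hscal : C -> carrier -> carrier;
  inner : carrier -> carrier -> C;
  hadd_assoc : forall x y z, hadd x (hadd y z) = hadd (hadd x y) z;
  hadd_comm : forall x y, hadd x y = hadd y x;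
  hadd_0 : forall x, hadd x hzero = x;
  hadd_opp : forall x, hadd x (hopp x) = hzero;
  hscal_1 : forall x, hscal C1 x = x;
  hscal_mul : forall a b x, hscal a (hscal b x) = hscal (Cmul a b) x;
  hscal_distr_v : forall a x y, hscal a (hadd x y) = hadd (hscal a x) (hscal a y);
  hscal_distr_s : forall a b x, hscal (Cadd a b) x = hadd (hscal a x) (hscal b x);
  inner_add_l : forall x y z, inner (hadd x y) z = Cadd (inner x z) (inner y z);
  inner_scal_l : forall a x y, inner (hscal a x) y = Cmul a (inner x y);
  inner_sym : forall x y, inner y x = Cconj (inner x y);
  inner_pos : forall x, Im (inner x x) = 0 /\ 0 <= Re (inner x x);
  inner_def : forall x, inner x x = C0 -> x = hzero;
  complete : forall u : nat -> carrier,
    (forall eps, eps > 0 -> exists N, forall m n, (N <= m)%nat -> (N <= n)%nat ->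
        sqrt (Re (inner (hadd (u m) (hopp (u n))) (hadd (u m) (hopp (u n))))) < eps) ->
    exists x, forall eps, eps > 0 -> exists N, forall n, (N <= n)%nat ->
        sqrt (Re (inner (hadd (u n) (hopp x)) (hadd (u n) (hopp x)))) < eps
}.

Arguments hzero {h}.
Arguments hadd {h}.
Arguments hopp {h}.
Arguments hscal {h}.
Arguments inner {h}.

Definition hsub {H : Hilbert} (x y : H) : H := hadd x (hopp y).
Definition hnorm {H : Hilbert} (x : H) : R := sqrt (Re (inner x x)).

Definition converges {H : Hilbert} (u : nat -> H) (x : H) : Prop :=
  forall eps, eps > 0 -> exists N, forall n, (N <= n)%nat -> hnorm (hsub (u n) x) < eps.

(** * (Possibly unbounded) linear operators H -> K: a domain and an action on it *)
Record Op (H K : Hilbert) := mkOp { dom : H -> Prop; app : H -> K }.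
Arguments dom {H K}.
Arguments app {H K}.

Definition linear_op {H K : Hilbert} (A : Op H K) : Prop :=
  dom A hzero /\
  (forall x y, dom A x -> dom A y -> dom A (hadd x y)) /\
  (forall a x, dom A x -> dom A (hscal a x)) /\
  (forall x y, dom A x -> dom A y -> app A (hadd x y) = hadd (app A x) (app A y)) /\
  (forall a x, dom A x -> app A (hscal a x) = hscal a (app A x)).

Definition densely_defined {H K : Hilbert} (A : Op H K) : Prop :=
  forall x : H, exists u : nat -> H, (forall n, dom A (u n)) /\ converges u x.

Definition closed_op {H K : Hilbert} (A : Op H K) : Prop :=
  forall (u : nat -> H) (x : H) (y : K),
    (forall n, dom A (u n)) -> converges u x -> converges (fun n => app A (u n)) y ->
    dom A x /\ app A x = y.

Definition closed_densely_defined {H K : Hilbert} (A : Op H K) : Prop :=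
  linear_op A /\ densely_defined A /\ closed_op A.

Definition bounded {H K : Hilbert} (T : H -> K) : Prop :=
  (forall x y, T (hadd x y) = hadd (T x) (T y)) /\
  (forall a x, T (hscal a x) = hscal a (T x)) /\
  exists M, forall x, hnorm (T x) <= M * hnorm x.

Definition intertwining {H K : Hilbert} (A : Op H H) (B : Op K K) (T : H -> K) : Prop :=
  bounded T /\
  forall xi, dom A xi -> dom B (T xi) /\ app B (T xi) = T (app A xi).

(** A ⊣ B via T: T bounded intertwining, injective, with densely defined inverse
    (the domain of T^{-1} is the range of T) *)
Definition quasi_similar_via {H K : Hilbert} (A : Op H H) (B : Op K K) (T : H -> K) : Prop :=
  intertwining A B T /\
  (forall x y, T x = T y -> x = y) /\
  (forall y : K, exists u : nat -> K, (forall n, exists x, T x = u n) /\ converges u y).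

Definition inverse_everywhere_bounded {H K : Hilbert} (T : H -> K) : Prop :=
  (forall y : K, exists x : H, T x = y) /\
  exists M, forall x : H, hnorm x <= M * hnorm (T x).

(** D is a core for the closed operator B: D ⊆ D(B) and the graph of B
    restricted to D is dense in the graph of B (closure of B|D equals B) *)
Definition core {K : Hilbert} (D : K -> Prop) (B : Op K K) : Prop :=
  (forall y, D y -> dom B y) /\
  forall y, dom B y -> exists u : nat -> K,
    (forall n, D (u n)) /\ converges u y /\ converges (fun n => app B (u n)) (app B y).

Definition image_dom {H K : Hilbert} (T : H -> K) (A : Op H H) : K -> Prop :=
  fun y => exists xi, dom A xi /\ T xi = y.

Definition shift_app {H : Hilbert} (A : Op H H) (lam : C) (x : H) : H :=
  hsub (app A x) (hscal lam x).

Definition resolvent {H : Hilbert} (A : Op H H) (lam : C) : Prop :=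
  exists Rl : H -> H, bounded Rl /\
    (forall y, dom A (Rl y) /\ shift_app A lam (Rl y) = y) /\
    (forall x, dom A x -> Rl (shift_app A lam x) = x).

Definition spectrum {H : Hilbert} (A : Op H H) (lam : C) : Prop := ~ resolvent A lam.

Definition point_spectrum {H : Hilbert} (A : Op H H) (lam : C) : Prop :=
  exists x, dom A x /\ x <> hzero /\ app A x = hscal lam x.

(** If [R] is the resolvent of [A] at [λ], then [S = T R T⁻¹] is bounded and is a right
    inverse of [B - λ] by the intertwining relation.  It is also a left inverse on [T D(A)];
    since [T D(A)] is a core and [S] is continuous, [S (B - λ) z = z] passes to the limit
    for every [z ∈ D(B)].  The point-spectrum inclusions are immediate: [T] maps eigenvectors
    of [A] to eigenvectors of [B], and an eigenvector would be killed by a resolvent. *)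
From Pilot Require Import Defs.
From Stdlib Require Import Rbase Rbasic_fun R_sqrt Lra Lia Psatz ClassicalEpsilon FunctionalExtensionality.
Open Scope R_scope.

Section VectorAlgebra.
Variable H : Hilbert.
Implicit Types x y z w : H.

Lemma hadd0l x : hadd hzero x = x.
Proof. rewrite hadd_comm. apply hadd_0. Qed.

Lemma haddNl x : hadd (hopp x) x = hzero.
Proof. rewrite hadd_comm. apply hadd_opp. Qed.

Lemma hadd_cancel_l x y z : hadd x y = hadd x z -> y = z.
Proof.
  intro E. rewrite <- (hadd0l y), <- (hadd0l z), <- (haddNl x), <- !hadd_assoc, E.
  reflexivity.
Qed.

Lemma hopp_unique x y : hadd x y = hzero -> y = hopp x.
Proof. intro E. apply (hadd_cancel_l x). rewrite E, hadd_opp. reflexivity. Qed.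

Lemma hoppK x : hopp (hopp x) = x.
Proof. symmetry. apply hopp_unique, haddNl. Qed.

Lemma hadd_ACA x y z w : hadd (hadd x y) (hadd z w) = hadd (hadd x z) (hadd y w).
Proof.
  rewrite <- !hadd_assoc. f_equal. rewrite !hadd_assoc, (hadd_comm _ y z). reflexivity.
Qed.

Lemma hoppD x y : hopp (hadd x y) = hadd (hopp x) (hopp y).
Proof. symmetry. apply hopp_unique. rewrite hadd_ACA, !hadd_opp, hadd_0. reflexivity. Qed.

Lemma hsub_eq0 x y : hsub x y = hzero -> x = y.
Proof. unfold hsub. intro E. apply hopp_unique in E. rewrite <- (hoppK x), <- E, hoppK. reflexivity. Qed.

Lemma hsubxx x : hsub x x = hzero.
Proof. apply hadd_opp. Qed.

Lemma hsubN x y : hopp (hsub x y) = hsub y x.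
Proof. unfold hsub. rewrite hoppD, hoppK, hadd_comm. reflexivity. Qed.

Lemma hsubACA x y z w : hsub (hsub x y) (hsub z w) = hsub (hsub x z) (hsub y w).
Proof. unfold hsub. rewrite !hoppD, !hoppK. apply hadd_ACA. Qed.

Lemma hsub_telescope x y w : hsub x y = hadd (hsub x w) (hsub w y).
Proof.
  unfold hsub. rewrite <- (hadd_assoc _ x (hopp w)), (hadd_assoc _ (hopp w) w), haddNl, hadd0l.
  reflexivity.
Qed.

Lemma hscal0 x : hscal Defs.C0 x = hzero.
Proof.
  apply (hadd_cancel_l (hscal Defs.C0 x)). rewrite <- hscal_distr_s, hadd_0. f_equal.
  unfold Cadd, Defs.C0; simpl; f_equal; ring.
Qed.

Lemma hscalN1 x : hscal (mkC (-1) 0) x = hopp x.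
Proof.
  apply hopp_unique. rewrite <- (hscal_1 _ x) at 1. rewrite <- hscal_distr_s.
  replace (Cadd Defs.C1 (mkC (-1) 0)) with Defs.C0 by (unfold Cadd, Defs.C1, Defs.C0; simpl; f_equal; ring).
  apply hscal0.
Qed.

Lemma hscalC a b x : hscal a (hscal b x) = hscal b (hscal a x).
Proof.
  rewrite !hscal_mul. f_equal. destruct a, b; unfold Cmul; simpl; f_equal; ring.
Qed.

End VectorAlgebra.

Section Additive.
Variables H K : Hilbert.
Variable f : H -> K.
Hypothesis f_add : forall x y, f (hadd x y) = hadd (f x) (f y).

Lemma additive0 : f hzero = hzero.
Proof. apply (hadd_cancel_l _ (f hzero)). rewrite <- f_add, !hadd_0. reflexivity. Qed.

Lemma additive_opp x : f (hopp x) = hopp (f x).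
Proof. apply hopp_unique. rewrite <- f_add, hadd_opp. exact additive0. Qed.

Lemma additive_sub x y : f (hsub x y) = hsub (f x) (f y).
Proof. unfold hsub. rewrite f_add, additive_opp. reflexivity. Qed.

End Additive.

Section Norm.
Variable H : Hilbert.
Implicit Types x y : H.

Lemma Re_inner_sym x y : Re (inner x y) = Re (inner y x).
Proof. rewrite (inner_sym _ x y). reflexivity. Qed.

Lemma Re_innerDl x y z : Re (inner (hadd x y) z) = Re (inner x z) + Re (inner y z).
Proof. rewrite inner_add_l. reflexivity. Qed.

Lemma Re_innerDr x y z : Re (inner x (hadd y z)) = Re (inner x y) + Re (inner x z).
Proof. rewrite (Re_inner_sym x), Re_innerDl, (Re_inner_sym y), (Re_inner_sym z). reflexivity. Qed.

Lemma Re_innerZl s x y : Re (inner (hscal (mkC s 0) x) y) = s * Re (inner x y).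
Proof. rewrite inner_scal_l. unfold Cmul; simpl; ring. Qed.

Lemma Re_innerZr s x y : Re (inner x (hscal (mkC s 0) y)) = s * Re (inner x y).
Proof. rewrite Re_inner_sym, Re_innerZl, Re_inner_sym. reflexivity. Qed.

Lemma Re_inner0l y : Re (inner hzero y) = 0.
Proof. assert (E := Re_innerDl hzero hzero y). rewrite hadd_0 in E. lra. Qed.

Lemma hnorm_ge0 x : 0 <= hnorm x.
Proof. apply sqrt_pos. Qed.

Lemma hnorm_sq x : hnorm x * hnorm x = Re (inner x x).
Proof. apply sqrt_sqrt, inner_pos. Qed.

Lemma hnorm0 : hnorm (@hzero H) = 0.
Proof. unfold hnorm. rewrite Re_inner0l. apply sqrt_0. Qed.

Lemma hnorm_eq0 x : hnorm x = 0 -> x = hzero.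
Proof.
  intro E. apply inner_def. destruct (inner_pos _ x) as [Him _].
  assert (Hre : Re (inner x x) = 0) by (rewrite <- hnorm_sq, E; ring).
  destruct (inner x x); simpl in *; subst; reflexivity.
Qed.

Lemma hnormZ a x : hnorm (hscal a x) = sqrt (Re a * Re a + Im a * Im a) * hnorm x.
Proof.
  unfold hnorm. rewrite inner_scal_l, (inner_sym _ (hscal a x) x), inner_scal_l.
  destruct (inner_pos _ x) as [Him Hre].
  rewrite <- sqrt_mult by nra. f_equal.
  destruct (inner x x), a; unfold Cmul, Cconj; simpl in *; subst; ring.
Qed.

Lemma hnormN x : hnorm (hopp x) = hnorm x.
Proof.
  rewrite <- hscalN1, hnormZ. simpl. replace (-1 * -1 + 0 * 0) with 1 by ring.
  rewrite sqrt_1. ring.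
Qed.

Lemma hnorm_subC x y : hnorm (hsub x y) = hnorm (hsub y x).
Proof. rewrite <- hsubN. apply hnormN. Qed.

Lemma Re_inner_le x y : Re (inner x y) <= hnorm x * hnorm y.
Proof.
  destruct (Req_dec (hnorm x) 0) as [Hx|Hx].
  { rewrite (hnorm_eq0 x Hx), Re_inner0l, hnorm0. lra. }
  destruct (Req_dec (hnorm y) 0) as [Hy|Hy].
  { rewrite (hnorm_eq0 y Hy), Re_inner_sym, Re_inner0l, hnorm0. lra. }
  pose proof (hnorm_ge0 x). pose proof (hnorm_ge0 y).
  (* expand [0 <= |y|x - |x|y|^2] *)
  assert (Z := proj2 (inner_pos _ (hadd (hscal (mkC (hnorm y) 0) x) (hscal (mkC (- hnorm x) 0) y)))).
  rewrite !Re_innerDl, !Re_innerDr, !Re_innerZl, !Re_innerZr, (Re_inner_sym y x), <- !hnorm_sq in Z.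
  assert (0 < hnorm x * hnorm y) by (apply Rmult_lt_0_compat; lra).
  nra.
Qed.

Lemma hnorm_triangle x y : hnorm (hadd x y) <= hnorm x + hnorm y.
Proof.
  assert (E := hnorm_sq (hadd x y)).
  rewrite !Re_innerDl, !Re_innerDr, (Re_inner_sym y x), <- !hnorm_sq in E.
  pose proof (Re_inner_le x y). pose proof (hnorm_ge0 x). pose proof (hnorm_ge0 y).
  pose proof (hnorm_ge0 (hadd x y)). nra.
Qed.

Lemma hnorm_sub_triangle x y : hnorm (hsub x y) <= hnorm x + hnorm y.
Proof. unfold hsub. rewrite <- (hnormN y). apply hnorm_triangle. Qed.

End Norm.

Arguments hnorm_eq0 {H}.
Arguments hnorm_ge0 {H}.

Lemma converges_unique {H : Hilbert} (u : nat -> H) x y :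
  converges u x -> converges u y -> x = y.
Proof.
  intros cx cy. apply hsub_eq0, hnorm_eq0.
  assert (small : forall eps, eps > 0 -> hnorm (hsub x y) < eps).
  { intros eps Heps.
    destruct (cx (eps / 2)) as [N1 HN1]; [lra|]. destruct (cy (eps / 2)) as [N2 HN2]; [lra|].
    specialize (HN1 (max N1 N2) (Nat.le_max_l _ _)). specialize (HN2 (max N1 N2) (Nat.le_max_r _ _)).
    rewrite (hsub_telescope _ x y (u (max N1 N2))).
    eapply Rle_lt_trans; [apply hnorm_triangle|]. rewrite hnorm_subC. lra. }
  destruct (hnorm_ge0 (hsub x y)) as [Hpos|]; [|auto].
  specialize (small _ Hpos). lra.
Qed.

Lemma converges_sub {H : Hilbert} (u v : nat -> H) x y :
  converges u x -> converges v y -> converges (fun n => hsub (u n) (v n)) (hsub x y).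
Proof.
  intros cu cv eps Heps.
  destruct (cu (eps / 2)) as [N1 HN1]; [lra|]. destruct (cv (eps / 2)) as [N2 HN2]; [lra|].
  exists (max N1 N2). intros n Hn.
  specialize (HN1 n ltac:(lia)). specialize (HN2 n ltac:(lia)).
  rewrite hsubACA. eapply Rle_lt_trans; [apply hnorm_sub_triangle|]. lra.
Qed.

Lemma bounded_pos_const {H K : Hilbert} (f : H -> K) :
  bounded f -> exists M, 0 < M /\ forall x, hnorm (f x) <= M * hnorm x.
Proof.
  intros (_ & _ & M & HM). exists (Rmax M 0 + 1). split.
  - pose proof (Rmax_r M 0). lra.
  - intro x. eapply Rle_trans; [apply HM|]. apply Rmult_le_compat_r; [apply hnorm_ge0|].
    pose proof (Rmax_l M 0). lra.
Qed.

Lemma bounded_converges {H K : Hilbert} (f : H -> K) (u : nat -> H) x :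
  bounded f -> converges u x -> converges (fun n => f (u n)) (f x).
Proof.
  intros Hf cu eps Heps. destruct (bounded_pos_const f Hf) as (M & HM0 & HM).
  destruct (cu (eps / M)) as [N HN]; [apply Rdiv_lt_0_compat; lra|].
  exists N. intros n Hn. rewrite <- (additive_sub _ _ f (proj1 Hf)).
  eapply Rle_lt_trans; [apply HM|].
  specialize (HN n Hn). apply (Rmult_lt_compat_l M) in HN; [|lra].
  replace (M * (eps / M)) with eps in HN by (field; lra). exact HN.
Qed.

Lemma bounded_comp {H K L : Hilbert} (f : H -> K) (g : K -> L) :
  bounded f -> bounded g -> bounded (fun x => g (f x)).
Proof.
  intros Hf Hg. pose proof Hf as (fA & fZ & _). pose proof Hg as (gA & gZ & _).
  destruct (bounded_pos_const f Hf) as (Mf & Mf0 & HMf).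
  destruct (bounded_pos_const g Hg) as (Mg & Mg0 & HMg).
  split; [|split].
  - intros x y. rewrite fA, gA. reflexivity.
  - intros a x. rewrite fZ, gZ. reflexivity.
  - exists (Mg * Mf). intro x. eapply Rle_trans; [apply HMg|].
    rewrite Rmult_assoc. apply Rmult_le_compat_l; [lra|apply HMf].
Qed.

Lemma bounded_inverse {H K : Hilbert} (T : H -> K) (S : K -> H) :
  bounded T -> (forall x y, T x = T y -> x = y) ->
  (exists M, forall x, hnorm x <= M * hnorm (T x)) ->
  (forall y, T (S y) = y) -> bounded S.
Proof.
  intros (TA & TZ & _) Tinj [M HM] TS. split; [|split].
  - intros a b. apply Tinj. rewrite TA, !TS. reflexivity.
  - intros c a. apply Tinj. rewrite TZ, !TS. reflexivity.
  - exists M. intro y. rewrite <- (TS y) at 2. apply HM.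
Qed.

Lemma bounded_scal {H : Hilbert} (a : Defs.C) : bounded (@hscal H a).
Proof.
  split; [|split].
  - apply hscal_distr_v.
  - intros b x. apply hscalC.
  - exists (sqrt (Re a * Re a + Im a * Im a)). intro x. rewrite hnormZ. lra.
Qed.

Lemma converges_shift {H : Hilbert} (B : Op H H) lam (u : nat -> H) z :
  converges u z -> converges (fun n => app B (u n)) (app B z) ->
  converges (fun n => shift_app B lam (u n)) (shift_app B lam z).
Proof.
  intros cu cBu. apply converges_sub; [exact cBu|].
  apply bounded_converges; [apply bounded_scal|exact cu].
Qed.

Lemma intertwining_shift {H K : Hilbert} (A : Op H H) (B : Op K K) T lam xi :
  intertwining A B T -> dom A xi -> shift_app B lam (T xi) = T (shift_app A lam xi).
Proof.
  intros [(TA & TZ & _) Tint] Hxi. unfold shift_app.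
  rewrite (additive_sub _ _ T TA), TZ, (proj2 (Tint xi Hxi)). reflexivity.
Qed.

Lemma bounded_left_inverse_core {K : Hilbert} (B : Op K K) (D : K -> Prop) lam (S : K -> K) :
  bounded S -> core D B ->
  (forall y, D y -> S (shift_app B lam y) = y) ->
  forall z, dom B z -> S (shift_app B lam z) = z.
Proof.
  intros HS [_ Hcore] HSD z Hz. destruct (Hcore z Hz) as (u & Du & cu & cBu).
  apply (converges_unique u); [|exact cu].
  assert (Eu : u = fun n => S (shift_app B lam (u n))).
  { extensionality n. symmetry. apply HSD, Du. }
  rewrite Eu at 1. apply bounded_converges; [exact HS|]. apply converges_shift; assumption.
Qed.

Lemma resolvent_intertwining {H K : Hilbert} (A : Op H H) (B : Op K K) (T : H -> K) lam :
  intertwining A B T -> (forall x y, T x = T y -> x = y) ->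
  inverse_everywhere_bounded T -> core (image_dom T A) B ->
  resolvent A lam -> resolvent B lam.
Proof.
  intros Hint Tinj [Tsurj Tinv_bd] Hcore (R & HR & HR1 & HR2).
  destruct (choice _ Tsurj) as [Tinv HTinv].
  assert (Tinv_bdd : bounded Tinv) by exact (bounded_inverse T Tinv (proj1 Hint) Tinj Tinv_bd HTinv).
  assert (S_bdd : bounded (fun y => T (R (Tinv y)))).
  { apply bounded_comp; [apply bounded_comp; assumption|exact (proj1 Hint)]. }
  exists (fun y => T (R (Tinv y))). split; [exact S_bdd|split].
  - intro y. destruct (HR1 (Tinv y)) as [DR ER]. split.
    + exact (proj1 (proj2 Hint _ DR)).
    + rewrite (intertwining_shift A B T lam _ Hint DR), ER. apply HTinv.
  - apply (bounded_left_inverse_core B (image_dom T A) lam _ S_bdd Hcore).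
    intros y (xi & Dxi & <-). rewrite (intertwining_shift A B T lam _ Hint Dxi).
    f_equal. rewrite <- (HR2 xi Dxi) at 2. f_equal. apply Tinj, HTinv.
Qed.

Lemma point_spectrum_intertwining {H K : Hilbert} (A : Op H H) (B : Op K K) (T : H -> K) lam :
  intertwining A B T -> (forall x y, T x = T y -> x = y) ->
  point_spectrum A lam -> point_spectrum B lam.
Proof.
  intros [(TA & TZ & _) Tint] Tinj (x & Dx & Nx & Ex). destruct (Tint x Dx) as [DTx ETx].
  exists (T x). split; [exact DTx|split].
  - intro E0. apply Nx, Tinj. rewrite E0. symmetry. exact (additive0 _ _ T TA).
  - rewrite ETx, Ex, TZ. reflexivity.
Qed.

Lemma point_spectrum_spectrum {H : Hilbert} (A : Op H H) lam :
  point_spectrum A lam -> spectrum A lam.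
Proof.
  intros (x & Dx & Nx & Ex) (R & (RA & _) & _ & HR2). apply Nx.
  rewrite <- (HR2 x Dx). unfold shift_app. rewrite Ex, hsubxx. exact (additive0 _ _ R RA).
Qed.

Theorem proposition3p14 (H K : Hilbert) (A : Op H H) (B : Op K K) (T : H -> K) :
  closed_densely_defined A -> closed_densely_defined B ->
  quasi_similar_via A B T ->
  inverse_everywhere_bounded T ->
  core (image_dom T A) B ->
  (forall lam, point_spectrum A lam -> point_spectrum B lam) /\
  (forall lam, point_spectrum B lam -> spectrum B lam) /\
  (forall lam, spectrum B lam -> spectrum A lam).
Proof.
  intros _ _ (Hint & Tinj & _) Hinv Hcore. split; [|split].
  - intro lam. exact (point_spectrum_intertwining A B T lam Hint Tinj).
  - intro lam. apply point_spectrum_spectrum.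
  - intros lam HsB HrA. exact (HsB (resolvent_intertwining A B T lam Hint Tinj Hinv Hcore HrA)).
Qed.
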